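(* If $G$ is a finite group of isometries of the rooted tree $\mathcal T$, then its centralizer $C_W(G)$ in $W=\mathrm{Aut}(\mathcal T)$ is uncountable.
   Context: $\mathcal T=X^*$ is the $d$-regular rooted tree over a finite alphabet $X$ with $d=|X|\ge2$, and $W$ its group of isometries. *)

From Stdlib Require List.
From mathcomp Require Import all_boot.
Set Implicit Arguments. Unset Strict Implicit. Unset Printing Implicit Defensive.

(* The d-regular rooted tree X^* : vertices are words over the finite
   alphabet X, the root is the empty word [::], and the children of a
   vertex w are the words rcons w x (x \in X). *)
Definition vertex (X : finType) := seq X.

Fixpoint lcp (X : finType) (u v : seq X) : nat :=
  match u, v with
  | x :: u', y :: v' => if x == y then (lcp u' v').+1 else 0
  | _, _ => 0
  end.

Definition tdist (X : finType) (u v : seq X) : nat :=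
  size u + size v - 2 * lcp u v.

(* Isometries of the rooted tree: surjective distance-preserving maps
   fixing the root.  (They are the automorphisms of the rooted tree.) *)
Definition is_isometry (X : finType) (f : seq X -> seq X) : Prop :=
  f [::] = [::] /\
  (forall u v, tdist (f u) (f v) = tdist u v) /\
  (forall v, exists u, f u = v).

Definition finite_isometry_group (X : finType)
    (G : (seq X -> seq X) -> Prop) : Prop :=
  (exists l : seq (seq X -> seq X), forall g, G g -> exists2 h, List.In h l & forall w, h w = g w) /\
  (forall g, G g -> is_isometry g) /\
  G id /\
  (forall g h, G g -> G h -> G (g \o h)) /\
  (forall g, G g -> exists2 h, G h & (forall w, h (g w) = w /\ g (h w) = w)).

Definition centralizer (X : finType) (G : (seq X -> seq X) -> Prop)
    (f : seq X -> seq X) : Prop :=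
  is_isometry f /\ forall g, G g -> forall w, f (g w) = g (f w).

Definition countable_maps (X : finType) (C : (seq X -> seq X) -> Prop) : Prop :=
  exists e : nat -> (seq X -> seq X), forall f, C f -> exists n, forall w, e n w = f w.

From mathcomp Require Import all_boot zify fingroup perm.
From Stdlib Require Import Classical ClassicalEpsilon.
Set Implicit Arguments. Unset Strict Implicit. Unset Printing Implicit Defensive.

(* Write T_v for the subtree of words with prefix v.  Since G is finite,
   descending the tree one group element at a time produces a vertex v such
   that every g in G fixing v fixes T_v pointwise.  Then two translates g1(T_v)
   and g2(T_v) are either disjoint or equal with g1 = g2 on T_v, so every
   automorphism phi of X^* extends to an element of C_W(G): send g(vu) to
   g(v phi(u)) and fix every vertex outside the G-orbit of T_v.  Taking for phi
   the maps that swap two letters at an arbitrary set of levels, a diagonal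
   argument shows that no sequence exhausts C_W(G). *)

Section LongestCommonPrefix.
Variable X : finType.
Implicit Types u w a b t : seq X.

Lemma lcp0s u : lcp u [::] = 0. Proof. by case: u. Qed.

Lemma lcp_le_size u w : lcp u w <= minn (size u) (size w).
Proof. by elim: u w => [|x u IH] [|y w] //=; case: eqP => // _; have := IH w; lia. Qed.

Lemma lcpC u w : lcp u w = lcp w u.
Proof.
by elim: u w => [|x u IH] [|y w] //=; rewrite eq_sym; case: eqP => // _; rewrite IH.
Qed.

Lemma lcp_prefix u w : lcp u w = size u -> w = u ++ drop (size u) w.
Proof. by elim: u w => [|x u IH] [|y w] //=; case: eqP => [-> [] /IH <-|]. Qed.

Lemma lcp_cat2l u a b : lcp (u ++ a) (u ++ b) = size u + lcp a b.
Proof. by elim: u => //= x u ->; rewrite eqxx. Qed.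

Lemma lcp_catr u a : lcp u (u ++ a) = size u.
Proof. by have := lcp_cat2l u [::] a; rewrite cats0 addn0. Qed.

Lemma lcp_cat_eqsize u u' a b : size u = size u' -> u <> u' ->
  lcp (u ++ a) (u' ++ b) = lcp u u'.
Proof.
elim: u u' => [|x u IH] [|x' u'] //= [eq_size] neq.
by case: eqP => // eq_x; rewrite IH // => eq_u; apply: neq; rewrite eq_x eq_u.
Qed.

Lemma lcp_cat_notprefix u a b : (forall t, b <> u ++ t) -> lcp (u ++ a) b = lcp u b.
Proof.
elim: u b => [|x u IH] b notpre; first by case: (notpre b).
case: b notpre => [|y b] notpre //=; case: eqP => // eq_y.
by rewrite IH // => t eq_b; apply: (notpre t); rewrite -eq_y eq_b.
Qed.

End LongestCommonPrefix.

Section Isometries.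
Variable X : finType.
Implicit Types u v w y t : seq X.
Implicit Types f g : seq X -> seq X.

Lemma isometry_size f : is_isometry f -> forall u, size (f u) = size u.
Proof. by move=> [f0 [fd _]] u; have := fd u [::]; rewrite f0 /tdist !lcp0s /=; lia. Qed.

Lemma isometry_lcp f : is_isometry f -> forall u w, lcp (f u) (f w) = lcp u w.
Proof.
move=> fiso u w; have := proj1 (proj2 fiso) u w; rewrite /tdist !(isometry_size fiso).
have := lcp_le_size (f u) (f w); have := lcp_le_size u w.
by rewrite !(isometry_size fiso); lia.
Qed.

Lemma isometry_of_lcp f : (forall u, size (f u) = size u) ->
  (forall u w, lcp (f u) (f w) = lcp u w) -> (forall w, exists u, f u = w) ->
  is_isometry f.
Proof.
move=> f_size f_lcp f_onto; split; first by apply/size0nil; rewrite f_size.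
by split=> // u w; rewrite /tdist !f_size f_lcp.
Qed.

Lemma eq_is_isometry f g : f =1 g -> is_isometry f -> is_isometry g.
Proof.
move=> eq_fg [f0 [fd fonto]]; split; first by rewrite -eq_fg.
split=> [u w|w]; first by rewrite -!eq_fg.
by have [u <-] := fonto w; exists u.
Qed.

Lemma isometry_cat f v y : is_isometry f ->
  f (v ++ y) = f v ++ drop (size v) (f (v ++ y)).
Proof.
move=> fiso; have pre : lcp (f v) (f (v ++ y)) = size (f v).
  by rewrite (isometry_lcp fiso) lcp_catr (isometry_size fiso).
by rewrite {1}(lcp_prefix pre) (isometry_size fiso).
Qed.

Lemma isometry_fix_prefix f v y t : is_isometry f -> f (v ++ y) = v ++ t -> f v = v.
Proof.
move=> fiso eq_f; have := congr1 (take (size v)) eq_f.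
by rewrite (isometry_cat v y fiso) !take_size_cat // (isometry_size fiso).
Qed.

End Isometries.

Definition rigid (X : finType) (h : seq X -> seq X) (v : seq X) :=
  h v = v -> forall u, h (v ++ u) = v ++ u.

Section RigidVertex.
Variable X : finType.
Implicit Types (h : seq X -> seq X) (v w : seq X).

Lemma rigid_cat h v w : is_isometry h -> rigid h v -> rigid h (v ++ w).
Proof.
move=> hiso hv hvw u; rewrite -catA; apply: hv.
exact: isometry_fix_prefix hiso hvw.
Qed.

Lemma rigid_extension h v : exists w, rigid h (v ++ w).
Proof.
have [fixes|] := classic (forall u, h (v ++ u) = v ++ u).
  by exists [::]; rewrite cats0 => _.
by move=> /not_all_ex_not[w moves]; exists w => /moves.
Qed.

Lemma exists_rigid_vertex (l : seq (seq X -> seq X)) :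
  exists v, forall h, List.In h l -> is_isometry h -> rigid h v.
Proof.
elim: l => [|h l [v rigid_l]]; first by exists [::].
have [w hw] := rigid_extension h v.
by exists (v ++ w) => h' [<- //|h'l h'iso]; apply: rigid_cat => //; apply: rigid_l.
Qed.

End RigidVertex.

Section FiniteIsometryGroup.
Variable X : finType.
Variable G : (seq X -> seq X) -> Prop.
Hypothesis hG : finite_isometry_group G.

Lemma group_isometry g : G g -> is_isometry g.
Proof. by case: hG => _ [+ _]; apply. Qed.

Lemma group_id : G id.
Proof. by case: hG => _ [_ []]. Qed.

Lemma group_comp g h : G g -> G h -> G (g \o h).
Proof. by case: hG => _ [_ [_ [+ _]]]; apply. Qed.

Lemma group_inv g : G g -> exists2 h, G h & forall w, h (g w) = w /\ g (h w) = w.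
Proof. by case: hG => _ [_ [_ [_]]]; apply. Qed.

Lemma exists_group_rigid_vertex : exists v, forall g, G g -> rigid g v.
Proof.
case: hG => [[l cover] _]; have [v rigid_l] := exists_rigid_vertex l.
exists v => g Gg; have [h hl eq_hg] := cover g Gg.
have hiso := eq_is_isometry (fun w => esym (eq_hg w)) (group_isometry Gg).
by move=> gv u; rewrite -!eq_hg; apply: rigid_l => //; rewrite eq_hg.
Qed.

End FiniteIsometryGroup.

Section Extension.
Variable X : finType.
Variable G : (seq X -> seq X) -> Prop.
Hypothesis hG : finite_isometry_group G.
Variable v : seq X.
Hypothesis v_rigid : forall g, G g -> rigid g v.
Implicit Types (a b u w : seq X) (phi : seq X -> seq X).

(* [g2^-1 g1] fixes [v], hence by rigidity the whole of T_v. *)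
Lemma orbit_subtree_inj g1 g2 u1 u2 : G g1 -> G g2 -> g1 (v ++ u1) = g2 (v ++ u2) ->
  u1 = u2 /\ forall y, g1 (v ++ y) = g2 (v ++ y).
Proof.
move=> G1 G2 eq12; have [k Gk kK] := group_inv hG G2.
have Gkg1 := group_comp hG Gk G1.
have eq_k : (k \o g1) (v ++ u1) = v ++ u2 by rewrite /= eq12 (proj1 (kK _)).
have fix_k := v_rigid Gkg1 (isometry_fix_prefix (group_isometry hG Gkg1) eq_k).
split; first by move: eq_k; rewrite fix_k => /eqP; rewrite eqseq_cat // => /andP[_ /eqP].
by move=> y; rewrite -[LHS](proj2 (kK _)); congr g2; exact: fix_k y.
Qed.

Definition in_orbit w := exists p : (seq X -> seq X) * seq X, G p.1 /\ w = p.1 (v ++ p.2).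

(* [g (v ++ u)] is sent to [g (v ++ phi u)], independently of the chosen
   representation by [orbit_subtree_inj]; vertices outside the orbit of T_v
   are fixed. *)
Definition extend phi w : seq X :=
  match excluded_middle_informative (in_orbit w) with
  | left orb => let p := proj1_sig (constructive_indefinite_description _ orb) in
                p.1 (v ++ phi p.2)
  | right _ => w
  end.

Variable phi : seq X -> seq X.
Hypothesis phi_iso : is_isometry phi.

Lemma extend_orbit g u : G g -> extend phi (g (v ++ u)) = g (v ++ phi u).
Proof.
move=> Gg; rewrite /extend; case: excluded_middle_informative => [orb|]; last first.
  by case; exists (g, u).
case: constructive_indefinite_description => [[g' u'] /= [Gg' eq_g]].
by have [-> eq_gg'] := orbit_subtree_inj Gg Gg' eq_g; rewrite eq_gg'.
Qed.

Lemma extend_subtree u : extend phi (v ++ u) = v ++ phi u.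
Proof. exact: extend_orbit u (group_id hG). Qed.

Lemma extend_out w : ~ in_orbit w -> extend phi w = w.
Proof. by rewrite /extend; case: excluded_middle_informative. Qed.

Lemma extend_size w : size (extend phi w) = size w.
Proof.
have [[[g u] /= [Gg ->]]|out] := classic (in_orbit w); last by rewrite extend_out.
by rewrite extend_orbit // !(isometry_size (group_isometry hG Gg)) !size_cat
  (isometry_size phi_iso).
Qed.

Lemma extend_onto w : exists a, extend phi a = w.
Proof.
have [[[g u] /= [Gg ->]]|out] := classic (in_orbit w); last by exists w; rewrite extend_out.
by have [u' <-] := proj2 (proj2 phi_iso) u; exists (g (v ++ u')); rewrite extend_orbit.
Qed.

Lemma extend_comm g w : G g -> extend phi (g w) = g (extend phi w).
Proof.
move=> Gg; have [[[g1 u] /= [G1 ->]]|out] := classic (in_orbit w).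
  have Ggg1 := group_comp hG Gg G1.
  by rewrite -[g (g1 _)]/((g \o g1) _) !extend_orbit.
rewrite !extend_out // => [[[g2 u] /= [G2 eq_g]]]; apply: out.
have [k Gk kK] := group_inv hG Gg; have Gkg2 := group_comp hG Gk G2.
exists (k \o g2, u); split => //.
by rewrite /= -eq_g (proj1 (kK _)).
Qed.

Lemma extend_lcp_subtree u b : lcp (extend phi (v ++ u)) (extend phi b) = lcp (v ++ u) b.
Proof.
rewrite extend_subtree.
have [[[g u'] /= [Gg ->]]|out] := classic (in_orbit b); last first.
  have notpre t : b <> v ++ t.
    by move=> eq_b; apply: out; exists (id, t); split; [exact: group_id hG|].
  by rewrite extend_out // !lcp_cat_notprefix.
rewrite extend_orbit //; have giso := group_isometry hG Gg.
have [gv|gv] := classic (g v = v).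
  by rewrite !(v_rigid Gg gv) !lcp_cat2l (isometry_lcp phi_iso).
rewrite (isometry_cat v (phi u') giso) (isometry_cat v u' giso).
by rewrite !lcp_cat_eqsize ?(isometry_size giso) // => /esym.
Qed.

Lemma extend_lcp_orbit g u b : G g ->
  lcp (extend phi (g (v ++ u))) (extend phi b) = lcp (g (v ++ u)) b.
Proof.
move=> Gg; have [k Gk kK] := group_inv hG Gg; have kiso := group_isometry hG Gk.
rewrite -(isometry_lcp kiso) -[RHS](isometry_lcp kiso) -!extend_comm // (proj1 (kK _)).
exact: extend_lcp_subtree.
Qed.

Lemma extend_lcp a b : lcp (extend phi a) (extend phi b) = lcp a b.
Proof.
have [[[g u] /= [Gg ->]]|outa] := classic (in_orbit a); first exact: extend_lcp_orbit.
have [[[g u] /= [Gg ->]]|outb] := classic (in_orbit b); last by rewrite !extend_out.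
by rewrite lcpC extend_lcp_orbit // lcpC.
Qed.

Lemma extend_centralizer : centralizer G (extend phi).
Proof.
split; last by move=> g Gg w; apply: extend_comm.
exact: isometry_of_lcp extend_size extend_lcp extend_onto.
Qed.

End Extension.

Section Flip.
Variable X : finType.
Variable t : X -> X.
Hypothesis tK : involutive t.
Implicit Types (s : nat -> bool) (u w : seq X).

Fixpoint flip s u : seq X :=
  if u is c :: u' then (if s 0 then t c else c) :: flip (s \o succn) u' else [::].

Lemma size_flip s u : size (flip s u) = size u.
Proof. by elim: u s => //= c u IH s; rewrite IH. Qed.

Lemma flipK s : involutive (flip s).
Proof. by move=> u; elim: u s => //= c u IH s; rewrite IH; case: (s 0); rewrite ?tK. Qed.

Lemma lcp_flip s u w : lcp (flip s u) (flip s w) = lcp u w.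
Proof.
elim: u s w => [|c u IH] s [|d w] //=.
by case: (s 0); rewrite ?(inj_eq (can_inj tK)); case: eqP => // _; rewrite IH.
Qed.

Lemma flip_isometry s : is_isometry (flip s).
Proof.
apply: isometry_of_lcp (size_flip s) (lcp_flip s) _.
by move=> w; exists (flip s w); rewrite flipK.
Qed.

Lemma nth_flip x0 s u i : i < size u ->
  nth x0 (flip s u) i = if s i then t (nth x0 u i) else nth x0 u i.
Proof. by elim: u s i => [|c u IH] s [|i] //= lt_i; rewrite IH. Qed.

End Flip.

(* Diagonal argument: the [n]-th letter below [v ++ nseq n.+1 x0] is flipped
   exactly when the [n]-th enumerated map does not flip it. *)
Lemma centralizer_uncountable (X : finType) (G : (seq X -> seq X) -> Prop)
    (hG : finite_isometry_group G) (v : seq X) (v_rigid : forall g, G g -> rigid g v)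
    (x0 x1 : X) : x0 != x1 -> ~ countable_maps (centralizer G).
Proof.
move=> neq_x [e cover].
pose w n := v ++ nseq n.+1 x0.
pose s n := nth x0 (e n (w n)) (size v + n) == x0.
have [n eq_e] := cover _ (extend_centralizer hG v_rigid (flip_isometry (tpermK x0 x1) s)).
have := congr1 (nth x0 ^~ (size v + n)) (eq_e (w n)).
rewrite /= (extend_subtree hG v_rigid) nth_cat ltnNge leq_addr addKn nth_flip ?size_nseq //.
rewrite nth_nseq ltnSn /s; case: eqP => [->|//]; rewrite tpermL => eq_x.
by rewrite eq_x eqxx in neq_x.
Qed.

Theorem theorem3p12 (X : finType) (hX : 2 <= #|X|)
    (G : (seq X -> seq X) -> Prop) :
  finite_isometry_group G -> ~ countable_maps (centralizer G).
Proof.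
move=> hG; have [v v_rigid] := exists_group_rigid_vertex hG.
have [x0 [x1 [_ _ neq_x]]] := card_gt1P hX.
exact: (centralizer_uncountable hG v_rigid neq_x).
Qed.
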